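(* Let $\Omega=(0,L_x)\times(0,L_y)$ discretized by the cell-centered grid with $N_x,N_y$ cells of sizes $h_x=L_x/N_x$, $h_y=L_y/N_y$. Let $M>0$, $\beta>0$, $\alpha\ge 0$, $\Delta t>0$, $F(z)=z^4/4$. Given cell-centered grid functions $Z^{n-1},Z^n,\Psi^n$ and a scalar $R^n$ ($n\ge1$) with $E_1^h(\tilde Z^{n+1/2})>0$, consider the scheme: find grid functions $Z^{n+1},\Psi^{n+1},W^{n+1/2}$ and a scalar $R^{n+1}$ such that $$\Psi^{n+1}-\Psi^{n}+\beta\Delta t\Psi^{n+1/2}=M\Delta t\,\Delta_hW^{n+1/2},\qquad \Delta t\,\Psi^{n+1/2}=Z^{n+1}-Z^n,$$ $$W^{n+1/2}=\Delta_h^2Z^{n+1/2}+2\Delta_h\tilde{Z}^{n+1/2}+\alpha Z^{n+1/2}+\frac{R^{n+1/2}}{\sqrt{E_1^h(\tilde{Z}^{n+1/2})}}F'(\tilde{Z}^{n+1/2}),$$ $$R^{n+1}-R^n=\frac{1}{2\sqrt{E_1^h(\tilde{Z}^{n+1/2}) }}(F'(\tilde{Z}^{n+1/2}),Z^{n+1}-Z^n)_m,$$ with $f^{n+1/2}=(f^{n+1}+f^n)/2$ and $\tilde Z^{n+1/2}=(3Z^n-Z^{n-1})/2$, where all grid functions $Z$, $W$ and $\Delta_hZ$ are extended by the discrete homogeneous Neumann conditions $Z_{0,j}=Z_{1,j}$, $Z_{N_x+1,j}=Z_{N_x,j}$, $Z_{i,0}=Z_{i,1}$, $Z_{i,N_y+1}=Z_{i,N_y}$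 (and identically for $W$ and for $\Delta_hZ$). Then: (i) the scheme has a unique solution; (ii) if $(\Psi^n,1)_m=0$, then $(\Psi^{n+1},1)_m=0$ and $(Z^{n+1},1)_m=(Z^n,1)_m$ (so, if $(\Psi^0,1)_m=0$, mass is conserved at every step); (iii) under this mean-zero condition, $$\tilde{\mathcal{E}}_d(Z^{n+1},R^{n+1},\Psi^{n+1})-\tilde{\mathcal{E}}_d(Z^n,R^n,\Psi^n)\leq -\frac{\beta}{M}\Delta t\,\|\Psi^{n+1/2}\|_{-1}^2,$$ where $\tilde{\mathcal{E}}_d(Z^n,R^n,\Psi^n)=\mathcal{E}_d(Z^n,R^n,\Psi^n)+\frac 1 2\|\nabla_hZ^{n}-\nabla_hZ^{n-1}\|^2$.
   Context: Difference operators: $[d_xg]_{i+1/2,j}=(g_{i+1,j}-g_{i,j})/h_x$, $[d_yg]_{i,j+1/2}=(g_{i,j+1}-g_{i,j})/h_y$, $[D_xg]_{i,j}=(g_{i+1/2,j}-g_{i-1/2,j})/h_x$, $[D_yg]_{i,j}=(g_{i,j+1/2}-g_{i,j-1/2})/h_y$, $\Delta_hg=D_x(d_xg)+D_y(d_yg)$ at cell centers. Inner products: $(f,g)_m=\sum_{i=1}^{N_x}\sum_{j=1}^{N_y}h_xh_yf_{i,j}g_{i,j}$, $(f,g)_x=\sum_{i=1}^{N_x-1}\sum_{j=1}^{N_y}h_xh_yf_{i+1/2,j}g_{i+1/2,j}$, $(f,g)_y=\sum_{i=1}^{N_x}\sum_{j=1}^{N_y-1}h_xh_yf_{i,j+1/2}g_{i,j+1/2}$;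 $\|f\|_m^2=(f,f)_m$, $\|\nabla_hZ\|^2=(d_xZ,d_xZ)_x+(d_yZ,d_yZ)_y$. $E_1^h(Z)=\sum_{i,j}h_xh_yF(Z_{i,j})$. Discrete $H^{-1}$ norm: for $\phi$ with $(\phi,1)_m=0$, let $\eta_\phi$ with $(\eta_\phi,1)_m=0$ solve $-\Delta_h\eta_\phi=\phi$ under the discrete homogeneous Neumann extension; $(\phi_1,\phi_2)_{-1}=(d_x\eta_{\phi_1},d_x\eta_{\phi_2})_x+(d_y\eta_{\phi_1},d_y\eta_{\phi_2})_y$ and $\|\phi\|_{-1}=\sqrt{(\phi,\phi)_{-1}}$. Discrete pseudo energy: $\mathcal{E}_d(Z,R,\Psi)=\frac 1 2 \|\Delta_hZ\|_m^2-\|\nabla_hZ\|^2+\frac \alpha 2 \|Z\|_m^2+R^2+\frac{1}{2M}\|\Psi\|_{-1}^2$. *)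

From HB Require Import structures.
From mathcomp Require Import all_boot all_order all_algebra.
From mathcomp Require Import reals.
From Stdlib Require Import ClassicalEpsilon.

Set Implicit Arguments.
Unset Strict Implicit.
Unset Printing Implicit Defensive.

Import Order.TTheory GRing.Theory Num.Theory.
Local Open Scope ring_scope.

(* Cell-centred grid functions on an Nx x Ny grid are matrices 'M[R]_(Nx,Ny).
   Cells are indexed 0-based: the paper's cell (i,j), 1<=i<=Nx, is entry
   (i-1, j-1).  hx, hy are the mesh sizes. *)
Section Grid.
Variables (R : realType) (Nx Ny : nat).
Local Notation grid := 'M[R]_(Nx, Ny).

(* value of a grid function at nat indices (0 outside the grid; only used
   inside the grid below) *)
Definition gval (A : grid) (i j : nat) : R :=
  match (insub i : option 'I_Nx), (insub j : option 'I_Ny) with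
  | Some i', Some j' => A i' j'
  | _, _ => 0
  end.

(* Neumann extension: the ghost cell to the right of the last cell takes the
   value of the last cell (Z_{N+1} = Z_N); the ghost cell to the left of the
   first cell takes the value of the first one (Z_0 = Z_1), realised by the
   truncated predecessor i.-1. *)
Definition xnext (i : nat) : nat := minn i.+1 Nx.-1.
Definition ynext (j : nat) : nat := minn j.+1 Ny.-1.

Variables (hx hy : R).

Definition lap (A : grid) : grid :=
  \matrix_(i < Nx, j < Ny)
    (((gval A (xnext i) j - gval A i j) / hx
      - (gval A i j - gval A i.-1 j) / hx) / hx
   + ((gval A i (ynext j) - gval A i j) / hy
      - (gval A i j - gval A i j.-1) / hy) / hy).

Definition ipm (A B : grid) : R :=
  \sum_(i < Nx) \sum_(j < Ny) hx * hy * A i j * B i j.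

Definition normm2 (A : grid) : R := ipm A A.

Definition gradnorm2 (A : grid) : R :=
  \sum_(i < Nx.-1) \sum_(j < Ny)
      hx * hy * ((gval A i.+1 j - gval A i j) / hx) ^+ 2
  + \sum_(i < Nx) \sum_(j < Ny.-1)
      hx * hy * ((gval A i j.+1 - gval A i j) / hy) ^+ 2.

Definition ones : grid := const_mx 1.

Definition eta (phi : grid) : grid :=
  epsilon (inhabits 0) (fun e : grid => ipm e ones = 0 /\ - lap e = phi).

Definition hm1sq (phi : grid) : R := gradnorm2 (eta phi).

Definition F (z : R) : R := z ^+ 4 / 4%:R.
Definition dF (z : R) : R := z ^+ 3.

Definition E1 (A : grid) : R := \sum_(i < Nx) \sum_(j < Ny) hx * hy * F (A i j).

Variables (alpha M : R).

Definition Ed (Z : grid) (Rs : R) (Psi : grid) : R :=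
  2^-1 * normm2 (lap Z) - gradnorm2 Z + alpha / 2%:R * normm2 Z + Rs ^+ 2
  + (2%:R * M)^-1 * hm1sq Psi.

(* modified energy tilde E_d(Z^n, R^n, Psi^n), Zprev = Z^{n-1};
   ||grad Z^n - grad Z^{n-1}||^2 = gradnorm2 (Z^n - Z^{n-1}) by linearity *)
Definition Etilde (Z Zprev : grid) (Rs : R) (Psi : grid) : R :=
  Ed Z Rs Psi + 2^-1 * gradnorm2 (Z - Zprev).

Definition avg (A B : grid) : grid := 2^-1 *: (A + B).

Definition ztilde (Zprev Z : grid) : grid := 2^-1 *: (3%:R *: Z - Zprev).

Variables (beta dt : R).

(* The scheme, with Z0 = Z^{n-1}, Z1 = Z^n, Psi1 = Psi^n, R1 = R^n and
   unknowns Z2 = Z^{n+1}, Psi2 = Psi^{n+1}, W = W^{n+1/2}, R2 = R^{n+1}. *)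
Definition scheme (Z0 Z1 Psi1 : grid) (R1 : R)
    (Z2 Psi2 W : grid) (R2 : R) : Prop :=
  let Zt := ztilde Z0 Z1 in
  let Zh := avg Z2 Z1 in
  let Rh := 2^-1 * (R2 + R1) in
  [/\ Psi2 - Psi1 + (beta * dt) *: avg Psi2 Psi1 = (M * dt) *: lap W,
      dt *: avg Psi2 Psi1 = Z2 - Z1,
      W = lap (lap Zh) + 2%:R *: lap Zt + alpha *: Zh
          + (Rh / Num.sqrt (E1 Zt)) *: map_mx dF Zt
    & R2 - R1 = (2%:R * Num.sqrt (E1 Zt))^-1 * ipm (map_mx dF Zt) (Z2 - Z1)].

End Grid.

From Pilot Require Import Defs.
From HB Require Import structures.
From mathcomp Require Import all_boot all_order all_algebra.
From mathcomp Require Import reals.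
From Stdlib Require Import ClassicalEpsilon.

Set Warnings "-notation-overridden".
From mathcomp Require Import ring lra zify.

Set Implicit Arguments.
Unset Strict Implicit.
Unset Printing Implicit Defensive.

Import Order.TTheory GRing.Theory Num.Theory.
Local Open Scope ring_scope.

Section SymmetricBilinearForm.
Variables (R : comPzRingType) (V : lmodType R) (b : V -> V -> R).
Hypothesis bL : forall a u v w, b (a *: u + v) w = a * b u w + b v w.
Hypothesis bC : forall u v, b u v = b v u.

Lemma bilinDl u v w : b (u + v) w = b u w + b v w.
Proof. by have := bL 1 u v w; rewrite scale1r mul1r. Qed.

Lemma bilin0l w : b 0 w = 0.
Proof. by apply: (addrI (b 0 w)); rewrite -bilinDl !addr0. Qed.

Lemma bilinZl a u w : b (a *: u) w = a * b u w.
Proof. by rewrite -[a *: u]addr0 bL bilin0l addr0. Qed.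

Lemma bilinNl u w : b (- u) w = - b u w.
Proof. by rewrite -scaleN1r bilinZl mulN1r. Qed.

Lemma bilinBl u v w : b (u - v) w = b u w - b v w.
Proof. by rewrite bilinDl bilinNl. Qed.

Lemma bilinDr u v w : b w (u + v) = b w u + b w v.
Proof. by rewrite bC bilinDl !(bC w). Qed.

Lemma bilinZr a u w : b w (a *: u) = a * b w u.
Proof. by rewrite bC bilinZl bC. Qed.

Lemma bilinNr u w : b w (- u) = - b w u.
Proof. by rewrite bC bilinNl bC. Qed.

Lemma bilinBr u v w : b w (u - v) = b w u - b w v.
Proof. by rewrite bC bilinBl !(bC w). Qed.

Lemma bilin_polar u v : b (u + v) (u - v) = b u u - b v v.
Proof. by rewrite bilinDl !bilinBr (bC v u); ring. Qed.

(* The identity behind the extrapolation ztilde = (3 z1 - z0)/2: tested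
   against z2 - z1 it produces the increment of |z|^2, the increment of
   |z - zprev|^2/2 and the remainder |z2 - 2 z1 + z0|^2/2 (times 2). *)
Lemma bilin_extrapolation z0 z1 z2 :
  2%:R * b (3%:R *: z1 - z0) (z2 - z1)
  = 2%:R * (b z2 z2 - b z1 z1) - b (z2 - z1) (z2 - z1) + b (z1 - z0) (z1 - z0)
    - b (z2 - 2%:R *: z1 + z0) (z2 - 2%:R *: z1 + z0).
Proof.
rewrite !(bilinDl, bilinBl, bilinNl, bilinZl, bilinDr, bilinBr, bilinNr, bilinZr).
rewrite (bC z1 z2) (bC z0 z2) (bC z0 z1); ring.
Qed.
End SymmetricBilinearForm.

Section InjectiveLinearEndomorphism.
Variables (K : fieldType) (m n : nat) (f : 'M[K]_(m, n) -> 'M[K]_(m, n)).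
Hypothesis fL : linear f.

Lemma linear_inj : (forall x, f x = 0 -> x = 0) -> injective f.
Proof.
move=> ker0 x y fxy; apply/eqP; rewrite -subr_eq0; apply/eqP/ker0.
by have := fL (-1) y x; rewrite !scaleN1r fxy addNr addrC.
Qed.

Lemma linear_surj : (forall x, f x = 0 -> x = 0) -> forall v, exists u, f u = v.
Proof.
move=> /linear_inj finj v.
pose g : {linear 'M[K]_(m, n) -> 'M[K]_(m, n)} :=
  HB.pack f (GRing.isLinear.Build K _ _ *:%R f fL).
have gE : linfun g =1 f by move=> x; rewrite lfunE.
have ker0 : lker (linfun g) == 0%VS by apply/lker0P => x y; rewrite !gE => /finj.
by exists ((linfun g)^-1%VF v); rewrite -gE lker0_lfunVK.
Qed.
End InjectiveLinearEndomorphism.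

(* Summation by parts for the one-dimensional Neumann second difference: the
   ghost values a_{-1} = a_0 (via the truncated predecessor) and
   a_N = a_{N-1} (via the clamped successor) make the boundary terms vanish. *)
Lemma neumann_summation_by_parts (R : comPzRingType) (N : nat) (a b : nat -> R) :
  (0 < N)%N ->
  \sum_(i < N) ((a (minn i.+1 N.-1) - a i) - (a i - a i.-1)) * b i
  = - \sum_(i < N.-1) (a i.+1 - a i) * (b i.+1 - b i).
Proof.
case: N => [//|n] _ /=.
have -> : \sum_(i < n.+1) ((a (minn i.+1 n) - a i) - (a i - a i.-1)) * b i
  = \sum_(i < n.+1) (a (minn i.+1 n) - a i) * b i
    - \sum_(i < n.+1) (a i - a i.-1) * b i.
  by rewrite -sumrB; apply: eq_bigr => i _; ring.
rewrite big_ord_recr big_ord_recl /= (minn_idPr (leqnSn n)).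
rewrite subrr mul0r addr0 subrr mul0r add0r.
rewrite -sumrB -sumrN; apply: eq_bigr => i _ /=.
by rewrite (minn_idPl (ltn_ord i)); ring.
Qed.

Lemma psumr2_eq0P (R : numDomainType) (m n : nat) (F : 'I_m -> 'I_n -> R) :
  (forall i j, 0 <= F i j) -> \sum_(i < m) \sum_(j < n) F i j = 0 ->
  forall i j, F i j = 0.
Proof.
move=> F0 S i j; apply: (@psumr_eq0P _ _ xpredT (F i)) => //.
by apply: (psumr_eq0P _ S) => // k _; apply: sumr_ge0 => l _.
Qed.

Section GridCalculus.
Variables (R : realType) (Nx Ny : nat) (hx hy : R).
Local Notation grid := 'M[R]_(Nx, Ny).
Local Notation ones := (ones R Nx Ny).

Lemma gval_ord (A : grid) (i : 'I_Nx) (j : 'I_Ny) : gval A i j = A i j.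
Proof. by rewrite /gval !valK. Qed.

Lemma gval_const c i j : (i < Nx)%N -> (j < Ny)%N ->
  gval (const_mx c : grid) i j = c.
Proof.
by move=> hi hj; rewrite -[i]/(Ordinal hi : nat) -[j]/(Ordinal hj : nat) gval_ord mxE.
Qed.

Lemma gvalL a (A B : grid) i j : gval (a *: A + B) i j = a * gval A i j + gval B i j.
Proof.
rewrite /gval; case: (insub i : option 'I_Nx) => [i'|];
  case: (insub j : option 'I_Ny) => [j'|]; rewrite ?mxE //; ring.
Qed.

Lemma lap_is_linear : linear (lap hx hy : grid -> grid).
Proof. by move=> a A B; apply/matrixP => i j; rewrite !mxE !gvalL; ring. Qed.

HB.instance Definition _ :=
  GRing.isLinear.Build R grid grid *:%R (lap hx hy) lap_is_linear.

Lemma ipmL a (A B C : grid) :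
  ipm hx hy (a *: A + B) C = a * ipm hx hy A C + ipm hx hy B C.
Proof.
rewrite /ipm mulr_sumr -big_split; apply: eq_bigr => i _.
by rewrite mulr_sumr -big_split; apply: eq_bigr => j _ /=; rewrite !mxE; ring.
Qed.

Lemma ipmC (A B : grid) : ipm hx hy A B = ipm hx hy B A.
Proof. by apply: eq_bigr => i _; apply: eq_bigr => j _; ring. Qed.

Definition gradip (A B : grid) : R :=
  \sum_(i < Nx.-1) \sum_(j < Ny)
      hy / hx * ((gval A i.+1 j - gval A i j) * (gval B i.+1 j - gval B i j))
  + \sum_(i < Nx) \sum_(j < Ny.-1)
      hx / hy * ((gval A i j.+1 - gval A i j) * (gval B i j.+1 - gval B i j)).

Lemma gradipL a (A B C : grid) : gradip (a *: A + B) C = a * gradip A C + gradip B C.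
Proof.
rewrite /gradip mulrDr addrACA; congr (_ + _);
  rewrite mulr_sumr -big_split; apply: eq_bigr => i _;
  rewrite mulr_sumr -big_split; apply: eq_bigr => j _ /=; rewrite !gvalL; ring.
Qed.

Lemma gradipC (A B : grid) : gradip A B = gradip B A.
Proof.
by congr (_ + _); apply: eq_bigr => i _; apply: eq_bigr => j _; ring.
Qed.

Lemma gradip_ones (A : grid) : gradip A ones = 0.
Proof.
rewrite /gradip !big1 ?addr0 // => i _; rewrite big1 // => j _;
  rewrite !gval_const ?subrr ?mulr0 //; case: i j => [i hi] [j hj] /=; lia.
Qed.

Hypotheses (hx0 : 0 < hx) (hy0 : 0 < hy) (Nx0 : (0 < Nx)%N) (Ny0 : (0 < Ny)%N).

Lemma gradnorm2E (A : grid) : gradnorm2 hx hy A = gradip A A.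
Proof.
by congr (_ + _); apply: eq_bigr => i _; apply: eq_bigr => j _;
  field; rewrite gt_eqF.
Qed.

Lemma green (A B : grid) : ipm hx hy (lap hx hy A) B = - gradip A B.
Proof.
have cell (i : 'I_Nx) (j : 'I_Ny) :
   hx * hy * lap hx hy A i j * B i j
   = hy / hx * (((gval A (minn i.+1 Nx.-1) j - gval A i j) -
                (gval A i j - gval A i.-1 j)) * gval B i j)
   + hx / hy * (((gval A i (minn j.+1 Ny.-1) - gval A i j) -
                (gval A i j - gval A i j.-1)) * gval B i j).
  by rewrite mxE -gval_ord /xnext /ynext; field; rewrite !gt_eqF.
rewrite /ipm.
under eq_bigr => i _ do under eq_bigr => j _ do rewrite cell.
under eq_bigr => i _ do rewrite big_split /=.
rewrite big_split /= /gradip opprD; congr (_ + _).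
  rewrite exchange_big /= [in RHS]exchange_big /= -sumrN; apply: eq_bigr => j _.
  rewrite -mulr_sumr.
  rewrite (neumann_summation_by_parts (fun k => gval A k j) (fun k => gval B k j) Nx0).
  by rewrite mulrN mulr_sumr.
rewrite -sumrN; apply: eq_bigr => i _.
rewrite -mulr_sumr.
rewrite (neumann_summation_by_parts (fun k => gval A i k) (fun k => gval B i k) Ny0).
by rewrite mulrN mulr_sumr.
Qed.

Lemma lap_sym (A B : grid) : ipm hx hy A (lap hx hy B) = ipm hx hy (lap hx hy A) B.
Proof. by rewrite ipmC !green gradipC. Qed.

Lemma lap_mass (A : grid) : ipm hx hy (lap hx hy A) ones = 0.
Proof. by rewrite green gradip_ones oppr0. Qed.

Lemma weighted_sqr_ge0 (x : R) : 0 <= hx * hy * x * x.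
Proof. by rewrite -mulrA -expr2 mulr_ge0 ?sqr_ge0 // mulr_ge0 // ltW. Qed.

Lemma normm2_ge0 (A : grid) : 0 <= normm2 hx hy A.
Proof.
by apply: sumr_ge0 => i _; apply: sumr_ge0 => j _; exact: weighted_sqr_ge0.
Qed.

Lemma normm2_eq0 (A : grid) : normm2 hx hy A = 0 -> A = 0.
Proof.
move=> /psumr2_eq0P A0; apply/matrixP => i j; rewrite mxE.
have /eqP := A0 (fun i j => weighted_sqr_ge0 (A i j)) i j.
by rewrite -mulrA !mulf_eq0 (gt_eqF hx0) (gt_eqF hy0) /= orbb => /eqP.
Qed.

Lemma gradnorm2_ge0 (A : grid) : 0 <= gradnorm2 hx hy A.
Proof.
by rewrite addr_ge0 //; apply: sumr_ge0 => i _; apply: sumr_ge0 => j _;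
  rewrite mulr_ge0 ?sqr_ge0 // mulr_ge0 // ltW.
Qed.

Lemma gradnorm2_eq0 (e : grid) :
  gradnorm2 hx hy e = 0 -> e = const_mx (gval e 0 0).
Proof.
have term_ge0 (y : R) : 0 <= hx * hy * y ^+ 2.
  by rewrite mulr_ge0 ?sqr_ge0 // mulr_ge0 // ltW.
have term_eq0 (d h : R) : 0 < h -> hx * hy * (d / h) ^+ 2 = 0 -> d = 0.
  move=> h0 /eqP; rewrite !mulf_eq0 (gt_eqF hx0) (gt_eqF hy0) invr_eq0 (gt_eqF h0) /=.
  by rewrite !orbF orbb => /eqP.
move=> /eqP; rewrite paddr_eq0; last 2 first.
- by apply: sumr_ge0 => i _; apply: sumr_ge0 => j _.
- by apply: sumr_ge0 => i _; apply: sumr_ge0 => j _.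
move=> /andP[/eqP/psumr2_eq0P dX /eqP/psumr2_eq0P dY].
have ex i j : (i < Nx)%N -> (j < Ny)%N -> gval e i j = gval e 0 j.
  move=> + hj; elim: i => [//|i IH] hi.
  have hi' : (i < Nx.-1)%N by rewrite -ltnS (ltn_predK hi).
  have /(term_eq0 _ _ hx0)/eqP := dX (fun _ _ => term_ge0 _) (Ordinal hi') (Ordinal hj).
  by rewrite subr_eq0 => /eqP ->; apply/IH/ltnW.
have ey j : (j < Ny)%N -> gval e 0 j = gval e 0 0.
  elim: j => [//|j IH] hj.
  have hj' : (j < Ny.-1)%N by rewrite -ltnS (ltn_predK hj).
  have /(term_eq0 _ _ hy0)/eqP := dY (fun _ _ => term_ge0 _) (Ordinal Nx0) (Ordinal hj').
  by rewrite subr_eq0 => /eqP ->; apply/IH/ltnW.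
by apply/matrixP => i j; rewrite mxE -gval_ord ex // ey.
Qed.

Lemma ipm_const_ones c :
  ipm hx hy (const_mx c) ones = c * (hx * hy * Nx%:R * Ny%:R).
Proof.
rewrite /ipm (eq_bigr (fun _ => \sum_(j < Ny) c * hx * hy)); last first.
  by move=> i _; apply: eq_bigr => j _; rewrite !mxE; ring.
rewrite !sumr_const !card_ord.
by rewrite -[c * hx * hy *+ Ny]mulr_natr -[(_ * _) *+ Nx]mulr_natr; ring.
Qed.

Lemma lap_kernel (e : grid) : lap hx hy e = 0 -> ipm hx hy e ones = 0 -> e = 0.
Proof.
move=> L0; have /gradnorm2_eq0 -> : gradnorm2 hx hy e = 0.
  by rewrite gradnorm2E -[LHS]opprK -green L0 (bilin0l ipmL) oppr0.
rewrite ipm_const_ones => /eqP; rewrite mulf_eq0 => /orP[/eqP -> //|].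
by rewrite !mulf_eq0 !gt_eqF // ltr0n.
Qed.

Lemma ipm_ones_gt0 : 0 < ipm hx hy ones ones.
Proof. by rewrite ipm_const_ones mul1r !mulr_gt0 // ltr0n. Qed.

End GridCalculus.

(* the bilinearity facts are passed as arguments to the generic lemmas on
   symmetric bilinear forms, so their grid parameters are made maximal *)
Arguments ipmL {R Nx Ny hx hy}.
Arguments ipmC {R Nx Ny hx hy}.
Arguments gradipL {R Nx Ny hx hy}.
Arguments gradipC {R Nx Ny hx hy}.

Section DiscreteHm1.
Variables (R : realType) (Nx Ny : nat) (hx hy : R).
Hypotheses (hx0 : 0 < hx) (hy0 : 0 < hy) (Nx0 : (0 < Nx)%N) (Ny0 : (0 < Ny)%N).
Local Notation grid := 'M[R]_(Nx, Ny).
Local Notation mass A := (ipm hx hy A (ones R Nx Ny)).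

(* The Neumann problem -Delta_h e = phi has a mass-free solution whenever phi
   is mass-free: x |-> -Delta_h x + (x,1)_m 1 has trivial kernel, hence is
   onto, and its value phi forces (x,1)_m = 0. *)
Lemma eta_exists (phi : grid) : mass phi = 0 ->
  exists e : grid, mass e = 0 /\ - lap hx hy e = phi.
Proof.
move=> phi0.
pose T (x : grid) := - lap hx hy x + mass x *: ones R Nx Ny.
have T_linear : linear T.
  move=> a x y; rewrite /T linearP /= ipmL.
  move: (lap hx hy x) (lap hx hy y) (mass x) (mass y) => u v p q.
  by apply/matrixP => i j; rewrite !mxE; ring.
have T_mass0 x : mass (T x) = 0 -> mass x = 0.
  rewrite /T (bilinDl ipmL) (bilinNl ipmL) lap_mass // oppr0 add0r (bilinZl ipmL).
  by move/eqP; rewrite mulf_eq0 (gt_eqF (ipm_ones_gt0 hx0 hy0 Nx0 Ny0)) orbF => /eqP.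
have T_kernel x : T x = 0 -> x = 0.
  move=> Tx0; have x0 : mass x = 0 by apply: T_mass0; rewrite Tx0 (bilin0l ipmL).
  apply: (lap_kernel hx0 hy0 Nx0 Ny0) => //; apply/eqP; rewrite -oppr_eq0; apply/eqP.
  by move: Tx0; rewrite /T x0 scale0r addr0.
have [u Tu] := linear_surj T_linear T_kernel phi.
have u0 : mass u = 0 by apply: T_mass0; rewrite Tu.
by exists u; split => //; move: Tu; rewrite /T u0 scale0r addr0.
Qed.

Lemma eta_spec (phi : grid) : mass phi = 0 ->
  mass (Defs.eta hx hy phi) = 0 /\ - lap hx hy (Defs.eta hx hy phi) = phi.
Proof.
by move=> /eta_exists ex; exact: (epsilon_spec (inhabits 0) _ ex).
Qed.

Lemma eta_unique (phi e : grid) : mass phi = 0 ->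
  mass e = 0 -> - lap hx hy e = phi -> e = Defs.eta hx hy phi.
Proof.
move=> phi0 e0 le; have [f0 lf] := eta_spec phi0.
apply/eqP; rewrite -subr_eq0; apply/eqP/(lap_kernel hx0 hy0 Nx0 Ny0).
  by apply/eqP; rewrite linearB subr_eq0 -eqr_opp le lf.
by rewrite (bilinBl ipmL) e0 f0 subrr.
Qed.

Lemma eta_linear a b (phi psi : grid) : mass phi = 0 -> mass psi = 0 ->
  Defs.eta hx hy (a *: phi + b *: psi)
  = a *: Defs.eta hx hy phi + b *: Defs.eta hx hy psi.
Proof.
move=> phi0 psi0; have [f0 lf] := eta_spec phi0; have [g0 lg] := eta_spec psi0.
symmetry; apply: eta_unique.
- by rewrite (bilinDl ipmL) !(bilinZl ipmL) phi0 psi0 !mulr0 addr0.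
- by rewrite (bilinDl ipmL) !(bilinZl ipmL) f0 g0 !mulr0 addr0.
- by rewrite linearD !linearZ opprD -!scalerN lf lg.
Qed.

Lemma ipm_eta (psi phi : grid) : mass psi = 0 ->
  ipm hx hy psi (Defs.eta hx hy phi)
  = gradip hx hy (Defs.eta hx hy psi) (Defs.eta hx hy phi).
Proof.
move=> /eta_spec[_ lpsi]; rewrite -[in LHS]lpsi (bilinNl ipmL) green //.
exact: opprK.
Qed.

End DiscreteHm1.

Section EnergyEstimate.
Variables (R : realType) (Nx Ny : nat) (hx hy alpha M beta dt : R).
Hypotheses (hx0 : 0 < hx) (hy0 : 0 < hy) (Nx0 : (0 < Nx)%N) (Ny0 : (0 < Ny)%N).
Hypotheses (M0 : 0 < M) (beta0 : 0 < beta) (dt0 : 0 < dt).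
Local Notation grid := 'M[R]_(Nx, Ny).
Local Notation mass A := (ipm hx hy A (ones R Nx Ny)).
Local Notation ipm := (ipm hx hy).
Local Notation lap := (lap hx hy).
Local Notation G := (gradip hx hy).
Local Notation eta := (Defs.eta hx hy).

(* Testing the Psi-equation with 1: both Psi and Z keep their mass. *)
Lemma scheme_mass (Z1 Z2 Psi1 Psi2 W : grid) :
  Psi2 - Psi1 + (beta * dt) *: avg Psi2 Psi1 = (M * dt) *: lap W ->
  dt *: avg Psi2 Psi1 = Z2 - Z1 ->
  mass Psi1 = 0 -> mass Psi2 = 0 /\ mass Z2 = mass Z1.
Proof.
move=> ePsi eZ m1.
have avg_mass : mass (avg Psi2 Psi1) = 2^-1 * mass Psi2.
  by rewrite (bilinZl ipmL) (bilinDl ipmL) m1 addr0.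
have m2 : mass Psi2 = 0.
  have := congr1 (fun X => mass X) ePsi.
  rewrite /= (bilinZl ipmL) lap_mass // mulr0 (bilinDl ipmL) (bilinBl ipmL).
  rewrite (bilinZl ipmL) avg_mass m1 subr0.
  have : 0 < beta * dt by rewrite mulr_gt0.
  by move: (mass Psi2) (beta * dt) => m q q0 H; nra.
split=> //; apply/eqP; rewrite -subr_eq0 -(bilinBl ipmL) -eZ (bilinZl ipmL).
by rewrite avg_mass m2 !mulr0.
Qed.

(* Testing the Psi-equation with eta of the midpoint Psi^{n+1/2}: the kinetic
   part of the energy changes by -(W, Z^{n+1}-Z^n)_m minus the damping. *)
Lemma kinetic_energy_balance (Z1 Z2 Psi1 Psi2 W : grid) :
  Psi2 - Psi1 + (beta * dt) *: avg Psi2 Psi1 = (M * dt) *: lap W ->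
  dt *: avg Psi2 Psi1 = Z2 - Z1 ->
  mass Psi1 = 0 -> mass Psi2 = 0 ->
  (2%:R * M)^-1 * (hm1sq hx hy Psi2 - hm1sq hx hy Psi1)
  = - ipm W (Z2 - Z1) - beta / M * dt * hm1sq hx hy (avg Psi2 Psi1).
Proof.
move=> ePsi eZ m1 m2.
set P := avg Psi2 Psi1.
have mP : mass P = 0 by rewrite (bilinZl ipmL) (bilinDl ipmL) m1 m2 addr0 mulr0.
have etaP : eta P = avg (eta Psi2) (eta Psi1) by rewrite /P /avg !scalerDr eta_linear.
have hm1sqE phi : hm1sq hx hy phi = G (eta phi) (eta phi) by rewrite /hm1sq gradnorm2E.
have lhs : ipm (Psi2 - Psi1 + (beta * dt) *: P) (eta P)
         = 2^-1 * (hm1sq hx hy Psi2 - hm1sq hx hy Psi1) + beta * dt * hm1sq hx hy P.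
  rewrite (bilinDl ipmL) (bilinBl ipmL) (bilinZl ipmL) !ipm_eta // -(bilinBl gradipL).
  rewrite !hm1sqE etaP /avg (bilinZr gradipL gradipC) gradipC.
  by rewrite (bilin_polar gradipL gradipC).
have rhs : ipm ((M * dt) *: lap W) (eta P) = - M * ipm W (Z2 - Z1).
  have [_ lapP] := eta_spec hx0 hy0 Nx0 Ny0 mP.
  rewrite (bilinZl ipmL) -lap_sym // -[lap (eta P)]opprK lapP -eZ.
  by rewrite (bilinNr ipmL ipmC) (bilinZr ipmL ipmC dt); ring.
move: ePsi => /(congr1 (ipm^~ (eta P))) /=; rewrite lhs rhs => balance.
have -> : ipm W (Z2 - Z1) = - (M^-1 * (2^-1 * (hm1sq hx hy Psi2 - hm1sq hx hy Psi1)
                                     + beta * dt * hm1sq hx hy P)).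
  by rewrite balance; field; rewrite gt_eqF.
by field; rewrite gt_eqF.
Qed.

Definition Epot (Z Zprev : grid) (Rs : R) : R :=
  2^-1 * normm2 hx hy (lap Z) - gradnorm2 hx hy Z + alpha / 2%:R * normm2 hx hy Z
  + Rs ^+ 2 + 2^-1 * gradnorm2 hx hy (Z - Zprev).

Lemma EtildeE (Z Zprev Psi : grid) (Rs : R) :
  Etilde hx hy alpha M Z Zprev Rs Psi
  = Epot Z Zprev Rs + (2%:R * M)^-1 * hm1sq hx hy Psi.
Proof. by rewrite /Etilde /Ed /Epot; ring. Qed.

(* Testing the W-equation with Z^{n+1} - Z^n: the potential part of the energy
   changes by (W, Z^{n+1}-Z^n)_m minus a nonnegative numerical dissipation.
   This holds for any nonlinearity g and any normalisation s of the scalar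
   auxiliary variable. *)
Lemma potential_energy_balance (Z0 Z1 Z2 W g : grid) (R1 R2 s : R) : s != 0 ->
  W = lap (lap (avg Z2 Z1)) + 2%:R *: lap (ztilde Z0 Z1) + alpha *: avg Z2 Z1
      + (2^-1 * (R2 + R1) / s) *: g ->
  R2 - R1 = (2%:R * s)^-1 * ipm g (Z2 - Z1) ->
  ipm W (Z2 - Z1)
  = Epot Z2 Z1 R2 - Epot Z1 Z0 R1 + 2^-1 * gradnorm2 hx hy (Z2 - 2%:R *: Z1 + Z0).
Proof.
move=> s0 eW eR.
have bilaplacian : ipm (lap (lap (avg Z2 Z1))) (Z2 - Z1)
                 = 2^-1 * (normm2 hx hy (lap Z2) - normm2 hx hy (lap Z1)).
  rewrite -lap_sym // /avg linearZ /= linearD /= linearB /=.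
  by rewrite (bilinZl ipmL) (bilin_polar ipmL ipmC).
have extrapolated :
    ipm (2%:R *: lap (ztilde Z0 Z1)) (Z2 - Z1) = - G (3%:R *: Z1 - Z0) (Z2 - Z1).
  by rewrite -linearZ green // /ztilde scalerA mulfV ?scale1r // pnatr_eq0.
have zeroth_order : ipm (alpha *: avg Z2 Z1) (Z2 - Z1)
                  = alpha / 2%:R * (normm2 hx hy Z2 - normm2 hx hy Z1).
  by rewrite !(bilinZl ipmL) (bilin_polar ipmL ipmC) mulrA.
have sav : ipm ((2^-1 * (R2 + R1) / s) *: g) (Z2 - Z1) = R2 ^+ 2 - R1 ^+ 2.
  have eg : ipm g (Z2 - Z1) = 2%:R * s * (R2 - R1) by rewrite eR; field.
  by rewrite (bilinZl ipmL) eg; field.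
have := @bilin_extrapolation _ _ G gradipL gradipC Z0 Z1 Z2.
rewrite eW !(bilinDl ipmL) bilaplacian extrapolated zeroth_order sav /Epot !gradnorm2E //.
by move=> ext; lra.
Qed.

Lemma energy_dissipation (Z0 Z1 Z2 Psi1 Psi2 W : grid) (R1 R2 : R) :
  0 < E1 hx hy (ztilde Z0 Z1) ->
  scheme hx hy alpha M beta dt Z0 Z1 Psi1 R1 Z2 Psi2 W R2 ->
  mass Psi1 = 0 -> mass Psi2 = 0 ->
  Etilde hx hy alpha M Z2 Z1 R2 Psi2 - Etilde hx hy alpha M Z1 Z0 R1 Psi1
  <= - (beta / M) * dt * hm1sq hx hy (avg Psi2 Psi1).
Proof.
move=> E0 [ePsi eZ eW eR] m1 m2.
have s0 : Num.sqrt (E1 hx hy (ztilde Z0 Z1)) != 0 by rewrite gt_eqF ?sqrtr_gt0.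
have := potential_energy_balance s0 eW eR.
have := kinetic_energy_balance ePsi eZ m1 m2.
have := gradnorm2_ge0 hx0 hy0 (Z2 - 2%:R *: Z1 + Z0).
by rewrite !EtildeE; lra.
Qed.

End EnergyEstimate.

Section UniqueSolvability.
Variables (R : realType) (Nx Ny : nat) (hx hy alpha M beta dt : R).
Hypotheses (hx0 : 0 < hx) (hy0 : 0 < hy) (Nx0 : (0 < Nx)%N) (Ny0 : (0 < Ny)%N).
Hypotheses (M0 : 0 < M) (beta0 : 0 < beta) (alpha0 : 0 <= alpha) (dt0 : 0 < dt).
Local Notation grid := 'M[R]_(Nx, Ny).
Local Notation ipm := (ipm hx hy).
Local Notation lap := (lap hx hy).
Variables (Z0 Z1 Psi1 : grid) (R1 : R).
Hypothesis E0 : 0 < E1 hx hy (ztilde Z0 Z1).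

Let Zt := ztilde Z0 Z1.
Let s := Num.sqrt (E1 hx hy Zt).
Let g := map_mx (@dF R) Zt.

(* Writing Z^{n+1} = Z^n + x and eliminating R^{n+1} and Psi^{n+1}, the scheme
   becomes a linear system for the increment x: W^{n+1/2} = W_expl + W_resp x
   and system x = system_rhs. *)
Definition W_expl : grid := lap (lap Z1) + 2%:R *: lap Zt + alpha *: Z1 + (R1 / s) *: g.

Definition W_resp (x : grid) : grid :=
  2^-1 *: lap (lap x) + (alpha / 2%:R) *: x + ((4%:R * (s * s))^-1 * ipm g x) *: g.

Definition system (x : grid) : grid :=
  (2%:R / dt + beta) *: x - (M * dt) *: lap (W_resp x).

Definition system_rhs : grid := 2%:R *: Psi1 + (M * dt) *: lap W_expl.

Lemma W_resp_linear : linear W_resp.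
Proof.
move=> a x y; rewrite /W_resp !linearP /= (bilinDr ipmL ipmC) (bilinZr ipmL ipmC).
move: (lap (lap x)) (lap (lap y)) (ipm g x) (ipm g y) => u v p q.
by apply/matrixP => i j; rewrite !mxE; ring.
Qed.

Lemma system_linear : linear system.
Proof.
move=> a x y; rewrite /system W_resp_linear !linearP /=.
move: (lap (W_resp x)) (lap (W_resp y)) => u v.
by apply/matrixP => i j; rewrite !mxE; ring.
Qed.

Lemma W_resp_energy (x : grid) :
  ipm x (W_resp x) = 2^-1 * normm2 hx hy (lap x) + alpha / 2%:R * normm2 hx hy x
                     + (4%:R * (s * s))^-1 * ipm g x ^+ 2.
Proof.
rewrite /normm2 /W_resp !(bilinDr ipmL ipmC) !(bilinZr ipmL ipmC) lap_sym //.
by rewrite (ipmC x g); ring.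
Qed.

(* Energy argument: a solution of the homogeneous system satisfies
   (2/dt + beta) (x, W_resp x)_m = -M dt ||grad_h W_resp x||^2 <= 0, which
   forces Delta_h x = 0; testing the system with 1 shows that x is mass free,
   hence x = 0. *)
Lemma system_kernel (x : grid) : system x = 0 -> x = 0.
Proof.
move=> /eqP; rewrite subr_eq0 => /eqP sys.
have c0 : 0 < 2%:R / dt + beta by rewrite addr_gt0 // divr_gt0.
have k0 : 0 <= (4%:R * (s * s))^-1.
  by rewrite invr_ge0 mulr_ge0 // mulr_ge0 // sqrtr_ge0.
have Wx_ge0 := W_resp_energy x.
have Wx_le0 : (2%:R / dt + beta) * ipm x (W_resp x) <= 0.
  have := congr1 (ipm^~ (W_resp x)) sys; rewrite /= !(bilinZl ipmL) green // => ->.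
  by rewrite -gradnorm2E // mulrN oppr_le0 mulr_ge0 ?gradnorm2_ge0 // mulr_ge0 // ltW.
have lap_x0 : lap x = 0.
  move: Wx_le0; rewrite pmulr_rle0 // Wx_ge0 => Wx0.
  have := normm2_ge0 hx0 hy0 (lap x).
  have : 0 <= alpha / 2%:R * normm2 hx hy x by rewrite mulr_ge0 ?divr_ge0 ?normm2_ge0.
  have : 0 <= (4%:R * (s * s))^-1 * ipm g x ^+ 2 by rewrite mulr_ge0 // sqr_ge0.
  by move=> *; apply: (normm2_eq0 hx0 hy0); lra.
apply: (lap_kernel hx0 hy0 Nx0 Ny0) => //.
have := congr1 (ipm^~ (ones R Nx Ny)) sys; rewrite /= !(bilinZl ipmL) lap_mass // mulr0.
by move/eqP; rewrite mulf_eq0 gt_eqF //= => /eqP.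
Qed.

Lemma scheme_reduction (x Psi2 W : grid) (R2 : R) :
  scheme hx hy alpha M beta dt Z0 Z1 Psi1 R1 (Z1 + x) Psi2 W R2 <->
  [/\ system x = system_rhs, Psi2 = (2%:R / dt) *: x - Psi1,
      W = W_expl + W_resp x & R2 = R1 + (2%:R * s)^-1 * ipm g x].
Proof.
have dtn0 : dt != 0 by rewrite gt_eqF.
have sn0 : s != 0 by rewrite gt_eqF // sqrtr_gt0.
rewrite /scheme -/Zt -/s -/g (_ : Z1 + x - Z1 = x); last by rewrite addrC addKr.
have Psi_iff : dt *: avg Psi2 Psi1 = x <-> Psi2 = (2%:R / dt) *: x - Psi1.
  by split=> [<-|->]; apply/matrixP => i j; rewrite !mxE; field.
have R_iff : R2 - R1 = (2%:R * s)^-1 * ipm g x <-> R2 = R1 + (2%:R * s)^-1 * ipm g x.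
  by split=> e; [rewrite -e | rewrite e]; ring.
have W_rhs : R2 = R1 + (2%:R * s)^-1 * ipm g x ->
    lap (lap (avg (Z1 + x) Z1)) + 2%:R *: lap Zt + alpha *: avg (Z1 + x) Z1
    + (2^-1 * (R2 + R1) / s) *: g = W_expl + W_resp x.
  move=> ->; rewrite /W_expl /W_resp /avg; move: (lap Zt) => w.
  rewrite !linearZ !linearD /=; move: (lap (lap x)) (lap (lap Z1)) (ipm g x) => u v q.
  by apply/matrixP => i j; rewrite !mxE; field.
have Psi_residual : Psi2 = (2%:R / dt) *: x - Psi1 -> W = W_expl + W_resp x ->
    Psi2 - Psi1 + (beta * dt) *: avg Psi2 Psi1 - (M * dt) *: lap W
    = system x - system_rhs.
  move=> -> ->; rewrite /system /system_rhs linearD /=.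
  move: (lap W_expl) (lap (W_resp x)) => u v.
  by apply/matrixP => i j; rewrite !mxE; field.
split=> [[ePsi eZ eW eR] | [sys eP eW eR]].
  have eP : Psi2 = (2%:R / dt) *: x - Psi1 by apply/Psi_iff.
  have eW' : W = W_expl + W_resp x by rewrite eW W_rhs //; apply/R_iff.
  split=> //; last exact/R_iff.
  by apply/eqP; rewrite -subr_eq0 -(Psi_residual eP eW') ePsi subrr.
split; [|exact/Psi_iff|by rewrite eW W_rhs|exact/R_iff].
by apply/eqP; rewrite -subr_eq0 (Psi_residual eP eW) sys subrr.
Qed.

Lemma unique_solvability :
  exists! t : grid * grid * grid * R,
    scheme hx hy alpha M beta dt Z0 Z1 Psi1 R1 t.1.1.1 t.1.1.2 t.1.2 t.2.
Proof.
have [x sys] := linear_surj system_linear system_kernel system_rhs.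
exists (Z1 + x, (2%:R / dt) *: x - Psi1, W_expl + W_resp x,
        R1 + (2%:R * s)^-1 * ipm g x).
split=> [|[[[Z2 Psi2] W] R2] /=]; first by apply/scheme_reduction.
rewrite -(addrNK Z1 Z2) addrC => /scheme_reduction[sys' -> -> ->].
by rewrite (linear_inj system_linear system_kernel (etrans sys' (esym sys))).
Qed.

End UniqueSolvability.

Theorem theorem3p2 (R : realType) (Lx Ly : R) (Nx Ny : nat)
    (M beta alpha dt : R) (Z0 Z1 Psi1 : 'M[R]_(Nx, Ny)) (R1 : R) :
  0 < Lx -> 0 < Ly -> (0 < Nx)%N -> (0 < Ny)%N ->
  0 < M -> 0 < beta -> 0 <= alpha -> 0 < dt ->
  let hx := Lx / Nx%:R in
  let hy := Ly / Ny%:R in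
  0 < E1 hx hy (ztilde Z0 Z1) ->
  (* (i) unique solvability *)
  (exists! s : 'M[R]_(Nx, Ny) * 'M[R]_(Nx, Ny) * 'M[R]_(Nx, Ny) * R,
      scheme hx hy alpha M beta dt Z0 Z1 Psi1 R1 s.1.1.1 s.1.1.2 s.1.2 s.2)
  /\
  (* (ii) mass conservation and (iii) energy dissipation *)
  (forall (Z2 Psi2 W : 'M[R]_(Nx, Ny)) (R2 : R),
      scheme hx hy alpha M beta dt Z0 Z1 Psi1 R1 Z2 Psi2 W R2 ->
      ipm hx hy Psi1 (ones R Nx Ny) = 0 ->
      [/\ ipm hx hy Psi2 (ones R Nx Ny) = 0,
          ipm hx hy Z2 (ones R Nx Ny) = ipm hx hy Z1 (ones R Nx Ny)
        & Etilde hx hy alpha M Z2 Z1 R2 Psi2 - Etilde hx hy alpha M Z1 Z0 R1 Psi1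
          <= - (beta / M) * dt * hm1sq hx hy (avg Psi2 Psi1)]).
Proof.
move=> Lx0 Ly0 Nx0 Ny0 M0 beta0 alpha0 dt0 hx hy E0.
have hx0 : 0 < hx by rewrite divr_gt0 // ltr0n.
have hy0 : 0 < hy by rewrite divr_gt0 // ltr0n.
split; first exact: unique_solvability.
move=> Z2 Psi2 W R2 sch m1.
have [m2 mZ] : ipm hx hy Psi2 (ones R Nx Ny) = 0 /\
               ipm hx hy Z2 (ones R Nx Ny) = ipm hx hy Z1 (ones R Nx Ny).
  by case: sch => ePsi eZ _ _; apply: scheme_mass ePsi eZ m1.
by split=> //; apply: energy_dissipation sch m1 m2.
Qed.
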